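(* Let $n\ge 2$, $k\ge 1$, $m=2n+k$. Let $\tau,\rho$ be the automorphisms of $SG_{n,k}$ given by $\tau S=S+1$ and $\rho S=k-S$ (elementwise, arithmetic modulo $m$), and let $\bar\tau,\bar\rho$ be the automorphisms of $K_{k+2}$ given by $\bar\tau x=x+1$ and $\bar\rho x=k-x$ (arithmetic modulo $k+2$). Let $c\colon SG_{n,k}\to K_{k+2}$ be the canonical colouring. Then $c\circ\tau\sim\bar\tau\circ c$ and $c\circ\rho\sim\bar\rho\circ c$.
   Context: A subset $S\subseteq\{0,\dots,m-1\}$ is stable if $\{i,i+1\}\not\subseteq S$ for all $0\le i\le m-2$ and $\{0,m-1\}\not\subseteq S$. The stable Kneser graph $SG_{n,k}$ has as vertices the stable $n$-element subsets of $\{0,\dots,m-1\}$, two being adjacent iff they are disjoint. $K_{k+2}$ is the loopless complete graph on $\{0,\dots,k+1\}$; the canonical colouring is $c(S)=\min S$ (with $S\subseteq\{0,\dots,m-1\}$ viewed as integers). For graphs $G,H$ and maps $f,g\colon V(G)\to V(H)$, $f\sim g$ means $(f(u),g(v))\in E(H)$ for all edges $(u,v)$ of $G$ (edges are ordered pairs of a symmetric relation). *)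

From mathcomp Require Import all_boot.
Set Implicit Arguments. Unset Strict Implicit. Unset Printing Implicit Defensive.

Definition stable m (S : {set 'I_m}) : bool :=
  [forall i : 'I_m, forall j : 'I_m,
     ((i \in S) && (j \in S)) ==>
     ~~ ((val j == (val i).+1) || ((val i == 0) && (val j == m.-1)))].

Definition SGvert (n k : nat) (S : {set 'I_(2 * n + k)}) : bool :=
  (#|S| == n) && stable S.

Arguments SGvert : clear implicits.
Definition SGadj m (S T : {set 'I_m}) : bool := [disjoint S & T].

Definition Kadj k (x y : 'I_k.+2) : bool := x != y.

Lemma ord_pos m (i : 'I_m) : 0 < m.
Proof. by case: m i => [[]|]. Qed.

Definition succI m (i : 'I_m) : 'I_m := ordS i.
Definition reflI (a : nat) m (i : 'I_m) : 'I_m :=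
  Ordinal (ltn_pmod (a + m - val i) (ord_pos i)).

Definition tauSG n k (S : {set 'I_(2 * n + k)}) : {set 'I_(2 * n + k)} :=
  [set succI i | i in S].
Definition rhoSG n k (S : {set 'I_(2 * n + k)}) : {set 'I_(2 * n + k)} :=
  [set reflI k i | i in S].

Definition taubar k (x : 'I_k.+2) : 'I_k.+2 := succI x.
Definition rhobar k (x : 'I_k.+2) : 'I_k.+2 := reflI k x.

(* min S (as a natural number); equals the minimum for nonempty S *)
Definition minS m (S : {set 'I_m}) : nat := \big[minn/m]_(i in S) val i.

(* canonical colouring c(S) = min S, viewed in {0,..,k+1}
   (for every vertex of SG_{n,k}, min S <= k+1, so inord is exact there) *)
Definition canon (n k : nat) (S : {set 'I_(2 * n + k)}) : 'I_k.+2 := inord (minS S).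
Arguments canon : clear implicits.

Definition sim_SG_K n k (f g : {set 'I_(2 * n + k)} -> 'I_k.+2) : Prop :=
  forall S T : {set 'I_(2 * n + k)},
    SGvert n k S -> SGvert n k T -> SGadj S T -> Kadj (f S) (g T).

(* A stable set lying in a window [lo, hi) has at most
   (hi - lo + 1) / 2 elements, because it is disjoint from its own shift by
   one and both sit inside [lo, hi].  For a vertex S of SG_{n,k} this gives
   min S <= k+1, and, using the window [k+1, m-1), that min S = k+1 forces
   m-1 into S.  Now let S, T be disjoint vertices, so min S != min T.
   - tau: c(tau S) is 0 when m-1 is in S and (min S) + 1 <= k+1 otherwise,
     while taubar (c T) = 0 exactly when min T = k+1, i.e. when m-1 is in T.
   - rho: c(rho S) <= rhobar (c S); and if c(rho S) = k - min T with
     min T <= k, the element of S reflected onto it is min T itself. *)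

From mathcomp Require Import all_boot zify.

Set Implicit Arguments.
Unset Strict Implicit.

Lemma sparse_size_le lo hi (s : seq nat) :
  uniq s -> (forall x, x \in s -> x.+1 \notin s) ->
  {subset s <= index_iota lo hi} -> (size s).*2 <= hi.+1 - lo.
Proof.
move=> s_uniq s_sparse s_sub.
have : size (s ++ map succn s) <= size (index_iota lo hi.+1).
  apply: uniq_leq_size => [|x].
    rewrite cat_uniq s_uniq (map_inj_uniq succn_inj) s_uniq andbT /=.
    by apply/hasPn => _ /mapP[x xs ->]; exact: s_sparse.
  rewrite mem_cat mem_index_iota => /orP[/s_sub | /mapP[y /s_sub + ->]];
    by rewrite mem_index_iota; lia.
by rewrite size_cat size_map size_iota addnn.
Qed.

Lemma stable_card_window m (S : {set 'I_m}) lo hi :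
  stable S -> (forall i, i \in S -> lo <= i < hi) -> (#|S|).*2 <= hi.+1 - lo.
Proof.
move=> /forallP S_stable S_window.
rewrite cardE -(size_map val); apply: sparse_size_le.
- by rewrite (map_inj_uniq val_inj) enum_uniq.
- move=> _ /mapP[i + ->]; rewrite mem_enum => iS.
  apply/mapP => -[j]; rewrite mem_enum => jS ji.
  by move/forallP: (S_stable i) => /(_ j); rewrite iS jS -ji eqxx.
- by move=> _ /mapP[i iS ->]; rewrite mem_index_iota S_window // -mem_enum.
Qed.

Section CyclicOrdinals.
Variable m : nat.
Implicit Types (S T : {set 'I_m}) (i j : 'I_m).

Lemma minS_le S j : j \in S -> minS S <= j.
Proof.
move=> jS; rewrite /minS; elim: (index_enum _) (mem_index_enum j) => // i r IHr.
rewrite inE big_cons => /predU1P[<-|/IHr]; first by rewrite jS geq_minl.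
by case: (i \in S) => // le_j; rewrite geq_min le_j orbT.
Qed.

Lemma minS_attained S : S != set0 -> exists2 j, j \in S & j = minS S :> nat.
Proof.
case/set0Pn=> j0 /(arg_minnP val) [j jS j_min]; exists j => //.
apply/eqP; rewrite eqn_leq minS_le // andbT.
apply: (big_ind (fun x => j <= x)) => [|x y jx jy|]; last exact: j_min.
- exact: ltnW.
- by rewrite leq_min jx jy.
Qed.

Lemma disjoint_val_neq S T i j :
  [disjoint S & T] -> i \in S -> j \in T -> i != j :> nat.
Proof.
by move=> ST iS jT; apply: contraTneq jT => /val_inj <-; rewrite (disjointFr ST iS).
Qed.

Lemma minS_disjoint_neq S T :
  [disjoint S & T] -> S != set0 -> T != set0 -> minS S != minS T.
Proof.
move=> ST /minS_attained[i iS <-] /minS_attained[j jT <-].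
exact: disjoint_val_neq ST iS jT.
Qed.

Lemma succI_val i : succI i = (if i == m.-1 :> nat then 0 else i.+1) :> nat.
Proof.
have i_lt := ltn_ord i; rewrite /=.
by case: eqP => [->|ne]; [rewrite prednK ?modnn | rewrite modn_small //]; lia.
Qed.

Lemma minS_succI_last S j :
  j \in S -> j = m.-1 :> nat -> minS [set succI i | i in S] = 0.
Proof.
move=> jS j_last; apply/eqP; rewrite -leqn0.
have succI_S : succI j \in [set succI i | i in S] by apply/imset_f.
by have := minS_le succI_S; rewrite succI_val j_last eqxx.
Qed.

Lemma minS_succI S : S != set0 -> (forall i, i \in S -> i != m.-1 :> nat) ->
  minS [set succI i | i in S] = (minS S).+1.
Proof.
move=> S_nz no_last; have [j jS j_min] := minS_attained S_nz.
have succI_S : succI j \in [set succI i | i in S] by apply/imset_f.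
apply/eqP; rewrite eqn_leq; apply/andP; split.
  by have := minS_le succI_S; rewrite succI_val (negPf (no_last j jS)) j_min.
have succI_S_nz : [set succI i | i in S] != set0 by rewrite imset_eq0.
have [_ /imsetP[i iS ->] <-] := minS_attained succI_S_nz.
by rewrite succI_val (negPf (no_last i iS)) ltnS minS_le.
Qed.

Lemma reflI_val k i : k < m ->
  reflI k i = (if i <= k then k - i else k + m - i) :> nat.
Proof.
move=> k_lt; have i_lt := ltn_ord i; rewrite /=.
case: ifP => i_le; last by rewrite modn_small //; lia.
by rewrite (_ : k + m - i = k - i + m) ?modnDr ?modn_small //; lia.
Qed.

End CyclicOrdinals.

Section StableKneser.
Variables (n k : nat) (n_gt0 : 0 < n).
Local Notation m := (2 * n + k).
Implicit Types (S T : {set 'I_m}).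

Lemma vertex_nonempty S : SGvert n k S -> S != set0.
Proof. by case/andP => /eqP S_card _; rewrite -card_gt0 S_card. Qed.

Lemma vertex_minS_le S : SGvert n k S -> minS S <= k.+1.
Proof.
case/andP => /eqP S_card /stable_card_window S_sparse.
have min_window i : i \in S -> minS S <= i < m by move=> iS; rewrite minS_le /=.
by have := S_sparse _ _ min_window; rewrite S_card; lia.
Qed.

Lemma vertex_minS_max S : SGvert n k S -> minS S = k.+1 ->
  exists2 j, j \in S & j = m.-1 :> nat.
Proof.
case/andP => /eqP S_card /stable_card_window S_sparse S_min.
have [/exists_inP[j jS /eqP j_last]|/exists_inPn no_last] :=
  boolP [exists j in S, j == m.-1 :> nat]; first by exists j.
have window i : i \in S -> k.+1 <= i < m.-1.
  by move=> iS; rewrite -S_min minS_le //=; have /= := no_last i iS; have := ltn_ord i; lia.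
by have := S_sparse _ _ window; rewrite S_card; lia.
Qed.

Lemma canon_val S : minS S <= k.+1 -> canon n k S = minS S :> nat.
Proof. exact: inordK. Qed.

Lemma taubar_val (x : 'I_k.+2) : taubar x = (if x == k.+1 :> nat then 0 else x.+1) :> nat.
Proof. exact: succI_val. Qed.

Lemma rhobar_val (x : 'I_k.+2) : rhobar x = (if x <= k then k - x else k.+1) :> nat.
Proof. rewrite /rhobar reflI_val //; case: ifP => // /negbT; have := ltn_ord x; lia. Qed.

Lemma minS_rhoSG_le S : SGvert n k S -> minS (rhoSG S) <= rhobar (canon n k S).
Proof.
move=> S_vert; have S_min := vertex_minS_le S_vert.
have k_lt : k < m by lia.
have rho_le i : i \in S -> minS (rhoSG S) <= reflI k i by move=> iS; apply/minS_le/imset_f.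
rewrite rhobar_val canon_val //; case: ifP => min_le.
  have [j jS j_min] := minS_attained (vertex_nonempty S_vert).
  by have := rho_le j jS; rewrite reflI_val // j_min min_le.
have [j jS j_last] : exists2 j, j \in S & j = m.-1 :> nat.
  by apply: vertex_minS_max => //; move/negbT: min_le; lia.
by have := rho_le j jS; rewrite reflI_val // j_last; case: ifP; lia.
Qed.

Lemma canon_tau_sim :
  sim_SG_K (fun S => canon n k (tauSG S)) (fun S => taubar (canon n k S)).
Proof.
move=> S T S_vert T_vert ST; rewrite /Kadj /tauSG; apply/eqP => /(congr1 (@nat_of_ord _)).
have [S_nz T_nz] := (vertex_nonempty S_vert, vertex_nonempty T_vert).
rewrite taubar_val (canon_val (vertex_minS_le T_vert)).
have [/exists_inP[j jS /eqP j_last]|/exists_inPn no_last] :=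
  boolP [exists j in S, j == m.-1 :> nat].
  have tau_min := minS_succI_last jS j_last.
  rewrite canon_val tau_min //.
  case: ifP => // /eqP /(vertex_minS_max T_vert) [j' j'T j'_last] _.
  by have := disjoint_val_neq ST jS j'T; rewrite j_last j'_last eqxx.
have S_le : minS S <= k.
  have := vertex_minS_le S_vert; rewrite leq_eqVlt ltnS => /orP[/eqP|//].
  by case/(vertex_minS_max S_vert) => j jS /eqP; rewrite (negPf (no_last j jS)).
have tau_min := minS_succI S_nz no_last.
rewrite canon_val tau_min //.
by case: ifP => // _ [] /eqP; apply/negP/minS_disjoint_neq.
Qed.

Lemma canon_rho_sim :
  sim_SG_K (fun S => canon n k (rhoSG S)) (fun S => rhobar (canon n k S)).
Proof.
move=> S T S_vert T_vert ST; rewrite /Kadj; apply/eqP => /(congr1 (@nat_of_ord _)).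
have [S_nz T_nz] := (vertex_nonempty S_vert, vertex_nonempty T_vert).
have rho_le := minS_rhoSG_le S_vert.
have rho_bound : minS (rhoSG S) <= k.+1.
  by apply: leq_trans rho_le _; rewrite -ltnS.
have k_lt : k < m by lia.
rewrite canon_val // rhobar_val (canon_val (vertex_minS_le T_vert)).
case: ifP => T_le rho_min.
  have rho_nz : rhoSG S != set0 by rewrite imset_eq0.
  have [_ /imsetP[i iS ->] i_min] := minS_attained rho_nz.
  have [j jT j_min] := minS_attained T_nz.
  have := disjoint_val_neq ST iS jT; rewrite j_min.
  by move: i_min; rewrite reflI_val // rho_min; have := ltn_ord i; case: ifP; lia.
have := minS_disjoint_neq ST S_nz T_nz.
have [S_min T_min] := (vertex_minS_le S_vert, vertex_minS_le T_vert).
move: rho_le; rewrite rhobar_val canon_val // rho_min.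
by case: ifP; lia.
Qed.

End StableKneser.

Theorem lemma4p5 (n k : nat) (hn : 2 <= n) (hk : 1 <= k) :
  sim_SG_K (fun S => canon n k (tauSG S)) (fun S => taubar (canon n k S)) /\
  sim_SG_K (fun S => canon n k (rhoSG S)) (fun S => rhobar (canon n k S)).
Proof.
have n_gt0 : 0 < n by apply: leq_trans hn.
by split; [apply: canon_tau_sim | apply: canon_rho_sim].
Qed.
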